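(* Let $(X,G)$ be topologically transitive and $\lambda$ a $G$-invariant Borel probability measure on $X$. There is an at most countable family $\mathcal N_c\subseteq\mathcal N$ such that $\bigcap_{N\in\mathcal N}K_t(N)=\bigcap_{N\in\mathcal N_c}K_t(N)$, and consequently $\bigcap_{N\in\mathcal N}K_0(N)=\bigcap_{N\in\mathcal N_c}K_0(N)$ for every $G$-invariant $X_0\subseteq X_t$ with $\lambda(X_0)=1$.
   Context: $G$ is a group acting by homeomorphisms on a compact metrizable space $X$; $X_t:=\{x\in X:\overline{Gx}=X\}$. $\mathcal N$ is the family of all closed $G$-invariant (for the diagonal action) subsets of $X^2$; for $N\in\mathcal N$, $N_x:=\{y:(x,y)\in N\}$, $d_N(x,x'):=\lambda(N_x\triangle N_{x'})$, $K_t(N):=\{(x,x')\in X_t^2:d_N(x,x')=0\}$ and $K_0(N):=K_t(N)\cap X_0^2$. *)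

From Stdlib Require Import Reals List.
Open Scope R_scope.

Section Defs.
Context {X : Type} (d : X -> X -> R).

Definition is_metric : Prop :=
  (forall x y, 0 <= d x y) /\ (forall x y, d x y = 0 <-> x = y) /\
  (forall x y, d x y = d y x) /\ (forall x y z, d x z <= d x y + d y z).

Definition is_open (U : X -> Prop) : Prop :=
  forall x, U x -> exists eps, 0 < eps /\ forall y, d x y < eps -> U y.

Definition is_compact_space : Prop :=
  forall (I : Type) (U : I -> X -> Prop),
    (forall i, is_open (U i)) -> (forall x, exists i, U i x) ->
    exists l : list I, forall x, exists i, In i l /\ U i x.

(** closed subsets of X^2 (product topology = topology of the max-metric) *)
Definition is_closed2 (N : X -> X -> Prop) : Prop :=
  forall x y, ~ N x y -> exists eps, 0 < eps /\
    forall x' y', d x x' < eps -> d y y' < eps -> ~ N x' y'.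

Definition continuous (f : X -> X) : Prop :=
  forall x eps, 0 < eps -> exists delta, 0 < delta /\
    forall y, d x y < delta -> d (f x) (f y) < eps.

Definition sigma_algebra (S : (X -> Prop) -> Prop) : Prop :=
  S (fun _ => True) /\
  (forall A, S A -> S (fun x => ~ A x)) /\
  (forall A : nat -> X -> Prop, (forall n, S (A n)) -> S (fun x => exists n, A n x)).

Definition Borel (A : X -> Prop) : Prop :=
  forall S, sigma_algebra S -> (forall U, is_open U -> S U) -> S A.

Definition is_borel_prob_measure (lam : (X -> Prop) -> R) : Prop :=
  (forall A, Borel A -> 0 <= lam A) /\
  lam (fun _ => False) = 0 /\
  lam (fun _ => True) = 1 /\
  (forall A : nat -> X -> Prop,
     (forall n, Borel (A n)) ->
     (forall n m x, n <> m -> A n x -> A m x -> False) ->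
     Un_cv (fun n => sum_f_R0 (fun i => lam (A i)) n) (lam (fun x => exists n, A n x))).

Definition dense (A : X -> Prop) : Prop :=
  forall U, is_open U -> (exists x, U x) -> exists x, U x /\ A x.

Context {G : Type} (mul : G -> G -> G) (one : G) (inv : G -> G).

Definition is_group : Prop :=
  (forall a b c, mul a (mul b c) = mul (mul a b) c) /\
  (forall a, mul one a = a) /\ (forall a, mul a one = a) /\
  (forall a, mul (inv a) a = one) /\ (forall a, mul a (inv a) = one).

Context (act : G -> X -> X).

(** action by homeomorphisms (each act g is continuous with continuous
    inverse act (inv g)) *)
Definition is_action_by_homeos : Prop :=
  (forall x, act one x = x) /\
  (forall g h x, act (mul g h) x = act g (act h x)) /\
  (forall g, continuous (act g)).

Definition top_transitive : Prop :=
  forall U V, is_open U -> is_open V -> (exists x, U x) -> (exists x, V x) ->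
    exists g x, U x /\ V (act g x).

Definition G_invariant_measure (lam : (X -> Prop) -> R) : Prop :=
  forall g A, Borel A -> lam (fun x => A (act g x)) = lam A.

Definition Xt (x : X) : Prop := dense (fun y => exists g, y = act g x).

Definition in_calN (N : X -> X -> Prop) : Prop :=
  is_closed2 N /\ forall g x y, N x y -> N (act g x) (act g y).

Definition G_invariant_set (A : X -> Prop) : Prop :=
  forall g x, A x -> A (act g x).

Definition dN (lam : (X -> Prop) -> R) (N : X -> X -> Prop) (x x' : X) : R :=
  lam (fun y => (N x y /\ ~ N x' y) \/ (N x' y /\ ~ N x y)).

Definition Kt (lam : (X -> Prop) -> R) (N : X -> X -> Prop) (x x' : X) : Prop :=
  Xt x /\ Xt x' /\ dN lam N x x' = 0.

Definition K0 (lam : (X -> Prop) -> R) (X0 : X -> Prop) (N : X -> X -> Prop)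
  (x x' : X) : Prop :=
  Kt lam N x x' /\ X0 x /\ X0 x'.
End Defs.

(* For N in 𝒩 the section measure x ↦ λ(N_x) is upper semicontinuous (N is closed,
   reverse Fatou for sets) and G-invariant, hence constant, say c, on the points with
   dense orbit.  On X_t we then have d_N(x,x') = 2 (c - λ(N_x ∩ N_x')), and the same
   semicontinuity shows that {d_N ≠ 0} is relatively open in X_t².  As a compact metric
   space is second countable, a Lindelöf argument extracts countably many N whose sets
   {d_N ≠ 0} cover those of the whole family. *)

From Stdlib Require Import Reals List Lra Lia Cantor Classical
  FunctionalExtensionality PropExtensionality IndefiniteDescription.
Open Scope R_scope.

Lemma pred_ext {T : Type} (A B : T -> Prop) : (forall x, A x <-> B x) -> A = B.
Proof.
  intro H; apply functional_extensionality; intro x; apply propositional_extensionality; auto.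
Qed.

Lemma inv_INR_S_pos n : 0 < / INR (S n).
Proof. apply Rinv_0_lt_compat, lt_0_INR; lia. Qed.

Lemma inv_INR_S_le m n : (m <= n)%nat -> / INR (S n) <= / INR (S m).
Proof. intro H; apply Rinv_le_contravar; [apply lt_0_INR; lia | apply le_INR; lia]. Qed.

Lemma inv_INR_S_lt eps : 0 < eps -> exists m, / INR (S m) < eps.
Proof.
  intro H; destruct (archimed_cor1 eps H) as [N [HN HN0]]; exists (pred N).
  replace (S (pred N)) with N by lia; exact HN.
Qed.

Section Borel.
Context {X : Type} (d : X -> X -> R).

Lemma borel_ext A B : (forall x, A x <-> B x) -> Borel d A -> Borel d B.
Proof. intro H; rewrite (pred_ext A B H); auto. Qed.

Lemma borel_open U : is_open d U -> Borel d U.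
Proof. intros HU S HS HO; auto. Qed.

Lemma borel_true : Borel d (fun _ => True).
Proof. intros S HS _; apply HS. Qed.

Lemma borel_compl A : Borel d A -> Borel d (fun x => ~ A x).
Proof. intros HA S HS HO; apply HS, HA; auto. Qed.

Lemma borel_countable_union (A : nat -> X -> Prop) :
  (forall n, Borel d (A n)) -> Borel d (fun x => exists n, A n x).
Proof. intros HA S HS HO; apply HS; intro n; apply HA; auto. Qed.

Lemma borel_false : Borel d (fun _ => False).
Proof. apply (borel_ext (fun x => ~ True)); [tauto | apply borel_compl, borel_true]. Qed.

Lemma borel_countable_inter (A : nat -> X -> Prop) :
  (forall n, Borel d (A n)) -> Borel d (fun x => forall n, A n x).
Proof.
  intro HA; apply (borel_ext (fun x => ~ exists n, ~ A n x)).
  - intro x; split; [intros H n; apply NNPP; eauto | intros H [n Hn]; auto].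
  - apply borel_compl, borel_countable_union; intro n; apply borel_compl, HA.
Qed.

Lemma borel_union A B : Borel d A -> Borel d B -> Borel d (fun x => A x \/ B x).
Proof.
  intros HA HB.
  apply (borel_ext (fun x => exists n : nat, match n with O => A x | _ => B x end)).
  - intro x; split; [intros [[|n] H]; auto | intros [H|H]; [exists O | exists 1%nat]; auto].
  - apply borel_countable_union; intros [|n]; auto.
Qed.

Lemma borel_inter A B : Borel d A -> Borel d B -> Borel d (fun x => A x /\ B x).
Proof.
  intros HA HB; apply (borel_ext (fun x => ~ (~ A x \/ ~ B x))).
  - intro x; split; [intro H; split; apply NNPP; tauto | tauto].
  - apply borel_compl, borel_union; apply borel_compl; auto.
Qed.

Lemma borel_diff A B : Borel d A -> Borel d B -> Borel d (fun x => A x /\ ~ B x).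
Proof. intros; apply borel_inter; auto using borel_compl. Qed.

End Borel.

Definition tail_union {X : Type} (E : nat -> X -> Prop) (m : nat) (y : X) : Prop :=
  exists n, (m <= n)%nat /\ E n y.

Definition limsup_set {X : Type} (E : nat -> X -> Prop) (y : X) : Prop :=
  forall m, tail_union E m y.

Lemma borel_tail_union {X : Type} (d : X -> X -> R) E m :
  (forall n, Borel d (E n)) -> Borel d (tail_union E m).
Proof.
  intro HE; apply borel_countable_union; intro n.
  destruct (Compare_dec.le_dec m n).
  - apply (borel_ext d (E n)); [intro; tauto | auto].
  - apply (borel_ext d (fun _ => False)); [intro; tauto | apply borel_false].
Qed.

Lemma borel_limsup_set {X : Type} (d : X -> X -> R) E :
  (forall n, Borel d (E n)) -> Borel d (limsup_set E).
Proof. intro HE; apply borel_countable_inter; intro m; apply borel_tail_union, HE. Qed.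

Section Measure.
Context {X : Type} (d : X -> X -> R) (lam : (X -> Prop) -> R).
Hypothesis Hlam : is_borel_prob_measure d lam.

Lemma measure_nonneg A : Borel d A -> 0 <= lam A.
Proof. apply Hlam. Qed.

Lemma measure_union_disjoint A B : Borel d A -> Borel d B ->
  (forall x, A x -> B x -> False) -> lam (fun x => A x \/ B x) = lam A + lam B.
Proof.
  intros HA HB Hdisj; destruct Hlam as [_ [Hempty [_ Hadd]]].
  set (D := fun n : nat => match n with O => A | 1%nat => B | _ => fun _ : X => False end).
  assert (HD : forall n, Borel d (D n)) by (intros [|[|n]]; simpl; auto using borel_false).
  assert (HDdisj : forall n m x, n <> m -> D n x -> D m x -> False).
  { intros [|[|n]] [|[|m]] x Hnm; simpl; try tauto; try lia; eauto. }
  assert (Hsum : forall n, sum_f_R0 (fun i => lam (D i)) (S n) = lam A + lam B).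
  { induction n; [simpl; lra|]. rewrite tech5, IHn; simpl; lra. }
  replace (fun x => A x \/ B x) with (fun x => exists n, D n x).
  - apply (UL_sequence _ _ _ (Hadd D HD HDdisj)).
    intros eps Heps; exists 1%nat; intros [|n] Hn; [lia|].
    rewrite Hsum; unfold Rdist; rewrite Rminus_diag, Rabs_R0; exact Heps.
  - apply pred_ext; intro x; split.
    + intros [[|[|n]] H]; simpl in H; tauto.
    + intros [H|H]; [exists O | exists 1%nat]; auto.
Qed.

Lemma measure_split A B : Borel d A -> Borel d B ->
  lam A = lam (fun x => A x /\ B x) + lam (fun x => A x /\ ~ B x).
Proof.
  intros HA HB; rewrite <- measure_union_disjoint by (auto using borel_inter, borel_diff; tauto).
  f_equal; apply pred_ext; intro x; tauto.
Qed.

Lemma measure_mono A B : Borel d A -> Borel d B -> (forall x, A x -> B x) -> lam A <= lam B.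
Proof.
  intros HA HB HAB; rewrite (measure_split B A HB HA).
  replace (fun x => B x /\ A x) with A by (apply pred_ext; intro x; split; auto; tauto).
  pose proof (measure_nonneg _ (borel_diff d B A HB HA)); lra.
Qed.

Lemma measure_compl A : Borel d A -> lam (fun x => ~ A x) = 1 - lam A.
Proof.
  intro HA; destruct Hlam as [_ [_ [Hfull _]]].
  rewrite <- Hfull, (measure_split _ A (borel_true d) HA).
  replace (fun x : X => True /\ A x) with A by (apply pred_ext; tauto).
  replace (fun x : X => True /\ ~ A x) with (fun x => ~ A x) by (apply pred_ext; tauto).
  lra.
Qed.

Lemma measure_symdiff A B : Borel d A -> Borel d B ->
  lam (fun y => (A y /\ ~ B y) \/ (B y /\ ~ A y)) =
  lam A + lam B - 2 * lam (fun y => A y /\ B y).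
Proof.
  intros HA HB.
  rewrite measure_union_disjoint by (auto using borel_diff; tauto).
  rewrite (measure_split A B HA HB), (measure_split B A HB HA).
  replace (fun y => B y /\ A y) with (fun y => A y /\ B y) by (apply pred_ext; tauto).
  lra.
Qed.

Lemma measure_increasing_union (A : nat -> X -> Prop) :
  (forall n, Borel d (A n)) -> (forall n x, A n x -> A (S n) x) ->
  Un_cv (fun n => lam (A n)) (lam (fun x => exists n, A n x)).
Proof.
  intros HA Hinc.
  assert (Hmono : forall n m x, (n <= m)%nat -> A n x -> A m x)
    by (intros n m x Hnm; induction Hnm; auto).
  (* the increments of the chain are disjoint and add up to it *)
  set (D := fun n : nat => match n with O => A O | S k => fun x => A (S k) x /\ ~ A k x end).
  assert (HD : forall n, Borel d (D n)) by (intros [|n]; simpl; auto using borel_diff).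
  assert (Hlt : forall n m x, (n < m)%nat -> D n x -> D m x -> False).
  { intros n [|m] x Hnm Hn Hm; [lia|]; destruct Hm as [_ Hm].
    apply Hm, (Hmono n); [lia|]; destruct n; simpl in Hn; tauto. }
  assert (HDdisj : forall n m x, n <> m -> D n x -> D m x -> False).
  { intros n m x Hnm; destruct (Nat.lt_gt_cases n m) as [[H|H] _]; eauto. }
  assert (Hpartial : forall n, sum_f_R0 (fun i => lam (D i)) n = lam (A n)).
  { induction n; [reflexivity|].
    rewrite tech5, IHn; simpl D.
    rewrite <- measure_union_disjoint by (auto using borel_diff; tauto).
    f_equal; apply pred_ext; intro x; destruct (classic (A n x)); intuition. }
  replace (fun x => exists n, A n x) with (fun x => exists n, D n x).
  - replace (fun n => lam (A n)) with (fun n => sum_f_R0 (fun i => lam (D i)) n)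
      by (apply functional_extensionality; exact Hpartial).
    apply Hlam; auto.
  - apply pred_ext; intro x; split.
    + intros [n Hn]; exists n; destruct n; simpl in Hn; tauto.
    + intros [n Hn]; induction n; [exists O; auto|].
      destruct (classic (A n x)) as [H|H]; auto; exists (S n); simpl; auto.
Qed.

Lemma measure_decreasing_inter_ge (F : nat -> X -> Prop) c :
  (forall n, Borel d (F n)) -> (forall n x, F (S n) x -> F n x) ->
  (forall n, c <= lam (F n)) -> c <= lam (fun x => forall n, F n x).
Proof.
  intros HF Hdec Hc.
  assert (HFc : forall n, Borel d (fun x => ~ F n x)) by (intro; apply borel_compl, HF).
  pose proof (measure_increasing_union _ HFc (fun n x H H' => H (Hdec n x H'))) as Hcv.
  assert (Hbound : lam (fun x => exists n, ~ F n x) <= 1 - c).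
  { apply Rnot_lt_le; intro Hlt.
    destruct (Hcv (lam (fun x => exists n, ~ F n x) - (1 - c))) as [N HN]; [lra|].
    specialize (HN N (le_n N)); specialize (Hc N); rewrite measure_compl in HN by apply HF.
    unfold Rdist in HN; apply Rabs_def2 in HN; lra. }
  replace (fun x => forall n, F n x) with (fun x => ~ exists n, ~ F n x).
  - rewrite measure_compl by (apply borel_countable_union, HFc); lra.
  - apply pred_ext; intro x; split; [intros H n; apply NNPP; eauto | intros H [n Hn]; auto].
Qed.

Lemma measure_limsup_set_ge (E : nat -> X -> Prop) c :
  (forall n, Borel d (E n)) -> (forall n, c <= lam (E n)) -> c <= lam (limsup_set E).
Proof.
  intros HE Hc; apply measure_decreasing_inter_ge.
  - intro m; apply borel_tail_union, HE.
  - intros m x [n [Hmn Hn]]; exists n; split; [lia | exact Hn].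
  - intro m; apply Rle_trans with (lam (E m)); [apply Hc|].
    apply measure_mono; [apply HE | apply borel_tail_union, HE|].
    intros x Hx; exists m; auto.
Qed.

End Measure.

Section Metric.
Context {X : Type} (d : X -> X -> R).
Hypothesis Hm : is_metric d.

Lemma dist_refl x : d x x = 0.
Proof. apply Hm; reflexivity. Qed.

Lemma ball_open x r : is_open d (fun y => d x y < r).
Proof.
  intros y Hy; exists (r - d x y); split; [lra|].
  intros w Hw; destruct Hm as [_ [_ [_ Htri]]]; specialize (Htri x y w); lra.
Qed.

Lemma borel_closed2_section N x : is_closed2 d N -> Borel d (N x).
Proof.
  intro HN; apply (borel_ext d (fun y => ~ ~ N x y)); [intro; split; [apply NNPP | tauto]|].
  apply borel_compl, borel_open; intros y Hy.
  destruct (HN x y Hy) as [e [He Hne]]; exists e; split; auto.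
  intros w Hw; apply Hne; auto; rewrite dist_refl; exact He.
Qed.

Lemma closed2_limsup_section N z y (a : nat -> X) :
  is_closed2 d N -> (forall n, d z (a n) < / INR (S n)) ->
  limsup_set (fun n => N (a n)) y -> N z y.
Proof.
  intros HN Ha Hy; apply NNPP; intro Hn; destruct (HN z y Hn) as [e [He Hne]].
  destruct (inv_INR_S_lt e He) as [m Hm']; destruct (Hy m) as [n [Hmn Hny]].
  apply (Hne (a n) y); auto; [|rewrite dist_refl; exact He].
  pose proof (Ha n); pose proof (inv_INR_S_le _ _ Hmn); lra.
Qed.

Lemma compact_countable_base : is_compact_space d ->
  exists U : nat -> X -> Prop,
    forall x eps, 0 < eps -> exists n, U n x /\ forall y, U n y -> d x y < eps.
Proof.
  intro Hcpt.
  assert (Hnet : forall k, exists l : list X, forall x, exists c, In c l /\ d c x < / INR (S k)).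
  { intro k; destruct (Hcpt X (fun c y => d c y < / INR (S k))) as [l Hl].
    - intro c; apply ball_open.
    - intro x; exists x; rewrite dist_refl; apply inv_INR_S_pos.
    - exists l; exact Hl. }
  destruct (functional_choice _ Hnet) as [net Hnet'].
  exists (fun n y => let (k, i) := Cantor.of_nat n in
            exists c, nth_error (net k) i = Some c /\ d c y < / INR (S k)).
  intros x eps Heps; destruct (inv_INR_S_lt (eps / 2)) as [k Hk]; [lra|].
  destruct (Hnet' k x) as [c [Hc Hcx]]; destruct (In_nth_error _ _ Hc) as [i Hi].
  exists (Cantor.to_nat (k, i)); rewrite Cantor.cancel_of_to; split; [eauto|].
  intros y [c' [Hc' Hc'y]]; rewrite Hi in Hc'; injection Hc' as <-.
  destruct Hm as [_ [_ [Hsym Htri]]]; specialize (Htri x c y); rewrite (Hsym x c) in Htri; lra.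
Qed.

Lemma orbit_dense_close {G : Type} (act : G -> X -> X) x z eps :
  Xt d act x -> 0 < eps -> exists g, d z (act g x) < eps.
Proof.
  intros Hx He; destruct (Hx (fun y => d z y < eps)) as [y [Hy [g ->]]]; eauto.
  - apply ball_open.
  - exists z; rewrite dist_refl; exact He.
Qed.

Variables (lam : (X -> Prop) -> R).
Hypothesis Hlam : is_borel_prob_measure d lam.

Lemma measure_section_inter_usc N z z' (a a' : nat -> X) c :
  is_closed2 d N ->
  (forall n, d z (a n) < / INR (S n)) -> (forall n, d z' (a' n) < / INR (S n)) ->
  (forall n, c <= lam (fun y => N (a n) y /\ N (a' n) y)) ->
  c <= lam (fun y => N z y /\ N z' y).
Proof.
  intros HN Ha Ha' Hc.
  assert (HB : forall n, Borel d (fun y => N (a n) y /\ N (a' n) y))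
    by (intro; apply borel_inter; apply borel_closed2_section, HN).
  apply Rle_trans with (1 := measure_limsup_set_ge d lam Hlam _ c HB Hc).
  apply (measure_mono d lam Hlam);
    [apply borel_limsup_set, HB | apply borel_inter; apply borel_closed2_section, HN|].
  intros y Hy; split.
  - apply (closed2_limsup_section N z y a HN Ha).
    intro m; destruct (Hy m) as [n [Hmn [Hn _]]]; exists n; auto.
  - apply (closed2_limsup_section N z' y a' HN Ha').
    intro m; destruct (Hy m) as [n [Hmn [_ Hn]]]; exists n; auto.
Qed.

End Metric.

Section Dynamics.
Context {X G : Type} (d : X -> X -> R) (mul : G -> G -> G) (one : G) (inv : G -> G)
  (act : G -> X -> X) (lam : (X -> Prop) -> R).
Hypotheses (Hm : is_metric d) (Hgrp : is_group mul one inv)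
  (Hact : is_action_by_homeos d mul one act)
  (Hlam : is_borel_prob_measure d lam) (Hinv : G_invariant_measure d act lam).

Lemma measure_section_act N g x : in_calN d act N -> lam (N (act g x)) = lam (N x).
Proof.
  intros [HNc HNi]; destruct Hgrp as [_ [_ [_ [Hl Hr]]]]; destruct Hact as [_ [Hmul _]].
  replace (N (act g x)) with (fun y => N x (act (inv g) y)).
  - apply Hinv, borel_closed2_section; auto.
  - apply pred_ext; intro y; split; intro H.
    + replace y with (act g (act (inv g) y)) by (rewrite <- Hmul, Hr; apply Hact).
      apply HNi, H.
    + replace x with (act (inv g) (act g x)) by (rewrite <- Hmul, Hl; apply Hact).
      apply HNi, H.
Qed.

Lemma measure_section_le N x z : in_calN d act N -> Xt d act x -> lam (N x) <= lam (N z).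
Proof.
  intros HN Hx.
  assert (Happrox : forall n, exists g, d z (act g x) < / INR (S n))
    by (intro n; apply orbit_dense_close; auto using inv_INR_S_pos).
  destruct (functional_choice _ Happrox) as [gs Hgs].
  replace (N z) with (fun y => N z y /\ N z y) by (apply pred_ext; tauto).
  apply (measure_section_inter_usc d Hm lam Hlam N z z _ _ _ (proj1 HN) Hgs Hgs).
  intro n; rewrite <- (measure_section_act N (gs n) x HN).
  right; f_equal; apply pred_ext; tauto.
Qed.

Lemma measure_section_const N x z :
  in_calN d act N -> Xt d act x -> Xt d act z -> lam (N x) = lam (N z).
Proof. intros; apply Rle_antisym; apply measure_section_le; auto. Qed.

Lemma dN_eq N x x' : is_closed2 d N ->
  dN lam N x x' = lam (N x) + lam (N x') - 2 * lam (fun y => N x y /\ N x' y).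
Proof. intro HN; apply (measure_symdiff d); auto; apply borel_closed2_section; auto. Qed.

Lemma dN_neq0_locally N x x' :
  in_calN d act N -> Xt d act x -> Xt d act x' -> dN lam N x x' <> 0 ->
  exists eps, 0 < eps /\ forall y y', Xt d act y -> Xt d act y' ->
    d x y < eps -> d x' y' < eps -> dN lam N y y' <> 0.
Proof.
  intros HN Hx Hx' Hd; apply NNPP; intro Hno.
  assert (Hseq : forall n, exists p : X * X, Xt d act (fst p) /\ Xt d act (snd p) /\
     d x (fst p) < / INR (S n) /\ d x' (snd p) < / INR (S n) /\ dN lam N (fst p) (snd p) = 0).
  { intro n; apply NNPP; intro Hn; apply Hno; exists (/ INR (S n)).
    split; [apply inv_INR_S_pos|]; intros y y' Hy Hy' H1 H2 H3; apply Hn; exists (y, y'); auto. }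
  destruct (functional_choice _ Hseq) as [ps Hps].
  assert (Hinter : lam (N x) <= lam (fun y => N x y /\ N x' y)).
  { apply (measure_section_inter_usc d Hm lam Hlam N x x' (fun n => fst (ps n))
      (fun n => snd (ps n))); [apply HN | apply Hps | apply Hps|].
    intro n; destruct (Hps n) as [Hy [Hy' [_ [_ H0]]]].
    rewrite (dN_eq N _ _ (proj1 HN)) in H0.
    pose proof (measure_section_const N x (fst (ps n)) HN Hx Hy).
    pose proof (measure_section_const N x (snd (ps n)) HN Hx Hy'); lra. }
  assert (Hsub : lam (fun y => N x y /\ N x' y) <= lam (N x)).
  { apply (measure_mono d lam Hlam); [apply borel_inter| |]; try apply borel_closed2_section;
      try apply HN; auto; tauto. }
  apply Hd; rewrite (dN_eq N _ _ (proj1 HN)), <- (measure_section_const N x x') by auto; lra.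
Qed.

End Dynamics.

(* The Lindelöf argument: for each basic set B n keep one member of the family
   separating all of B n, if there is one. *)
Lemma countable_separating_subfamily {A Y : Type} (P : A -> Prop) (a0 : A)
  (sep : A -> Y -> Prop) (B : nat -> Y -> Prop) :
  P a0 ->
  (forall a y, P a -> sep a y -> exists n, B n y /\ forall z, B n z -> sep a z) ->
  exists c : nat -> A, (forall n, P (c n)) /\
    forall a y, P a -> sep a y -> exists n, sep (c n) y.
Proof.
  intros Ha0 Hbase.
  assert (Hpick : forall n, exists a, P a /\
    ((exists a', P a' /\ forall z, B n z -> sep a' z) -> forall z, B n z -> sep a z)).
  { intro n; destruct (classic (exists a', P a' /\ forall z, B n z -> sep a' z))
      as [[a' Ha']|Hno]; [exists a'; tauto | exists a0; tauto]. }
  destruct (functional_choice _ Hpick) as [c Hc]; exists c; split; [apply Hc|].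
  intros a y Ha Hy; destruct (Hbase a y Ha Hy) as [n [Hn Hsep]].
  exists n; apply (proj2 (Hc n)); eauto.
Qed.

Theorem mainTheorem10
  (X : Type) (d : X -> X -> R) (Hmet : is_metric d) (Hcpt : is_compact_space d)
  (G : Type) (mul : G -> G -> G) (one : G) (inv : G -> G)
  (Hgrp : is_group mul one inv)
  (act : G -> X -> X) (Hact : is_action_by_homeos d mul one act)
  (Htrans : top_transitive d act)
  (lam : (X -> Prop) -> R) (Hlam : is_borel_prob_measure d lam)
  (Hinv : G_invariant_measure d act lam) :
  exists Nc : nat -> X -> X -> Prop,
    (forall n, in_calN d act (Nc n)) /\
    (forall x x', (forall N, in_calN d act N -> Kt d act lam N x x') <->
                  (forall n, Kt d act lam (Nc n) x x')) /\
    (forall X0 : X -> Prop,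
       G_invariant_set act X0 -> (forall x, X0 x -> Xt d act x) ->
       Borel d X0 -> lam X0 = 1 ->
       forall x x', (forall N, in_calN d act N -> K0 d act lam X0 N x x') <->
                    (forall n, K0 d act lam X0 (Nc n) x x')).
Proof.
  destruct (compact_countable_base d Hmet Hcpt) as [U HU].
  destruct (countable_separating_subfamily (in_calN d act) (fun _ _ => True)
    (fun N p => Xt d act (fst p) /\ Xt d act (snd p) /\ dN lam N (fst p) (snd p) <> 0)
    (fun n p => Xt d act (fst p) /\ Xt d act (snd p) /\
       U (fst (Cantor.of_nat n)) (fst p) /\ U (snd (Cantor.of_nat n)) (snd p)))
    as [Nc [HNc Hsep]].
  - split; [intros x y H; exfalso; exact (H I) | auto].
  - intros N [x x'] HN [Hx [Hx' Hd]]; simpl in *.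
    destruct (dN_neq0_locally d mul one inv act lam Hmet Hgrp Hact Hlam Hinv N x x' HN Hx Hx' Hd)
      as [eps [Heps Hnear]].
    destruct (HU x eps Heps) as [i [Hi Hiy]]; destruct (HU x' eps Heps) as [j [Hj Hjy]].
    exists (Cantor.to_nat (i, j)); rewrite Cantor.cancel_of_to; simpl.
    split; [auto | intros [y y'] (Hy & Hy' & Hiy' & Hjy'); simpl; auto].
  - assert (HKt : forall x x', (forall N, in_calN d act N -> Kt d act lam N x x') <->
                                (forall n, Kt d act lam (Nc n) x x')).
    { intros x x'; split; [intros H n; apply H, HNc|].
      intros H N HN; destruct (H O) as [Hx [Hx' _]]; do 2 (split; [assumption|]).
      apply NNPP; intro Hd; destruct (Hsep N (x, x') HN (conj Hx (conj Hx' Hd))) as [n Hn].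
      apply (proj2 (proj2 Hn)), (H n). }
    exists Nc; split; [exact HNc | split; [exact HKt|]].
    intros X0 _ _ _ _ x x'; split; [intros H n; apply H, HNc|].
    intros H N HN; destruct (H O) as [_ HX0]; split; [|exact HX0].
    apply (proj2 (HKt x x')); [intro n; apply H | exact HN].
Qed.
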